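(* Let $\mathcal A_1,\mathcal B_1:U_1\to V_1$ be surjective linear maps of finite-dimensional vector spaces over a field $\mathbb F$. Let $U_2=U_1/\operatorname{Ker}\mathcal B_1$, $V_2=V_1/\mathcal A_1(\operatorname{Ker}\mathcal B_1)$, and let $\mathcal A_2,\mathcal B_2:U_2\to V_2$ be the maps induced by $\mathcal A_1,\mathcal B_1$; similarly let $U_3=U_2/\operatorname{Ker}\mathcal B_2$. Let $(A_1,B_1)$ and $(A_2,B_2)$ be the matrix pairs of $(\mathcal A_1,\mathcal B_1)$ and $(\mathcal A_2,\mathcal B_2)$ in arbitrary bases, and take any regularizing decomposition of $(A_1,B_1)$. Then a regularizing decomposition of $(A_2,B_2)$ is obtained from it by deleting all summands $(L_1,R_1)=(0_{01},0_{01})$, replacing each summand $(L_k,R_k)$ with $k\ge2$ by $(L_{k-1},R_{k-1})$, and leaving the regular part unchanged. The number of summands $(L_1,R_1)$ in the decomposition of $(A_1,B_1)$ equals $\dim U_1-2\dim U_2+\dim U_3$.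
   Context: $J_k(0)$ denotes the $k\times k$ nilpotent Jordan block with ones directly below the diagonal. $L_k$ and $R_k$ are the $(k-1)\times k$ matrices obtained from $I_k$ by deleting its last row, respectively its first row ($L_1=R_1=0_{01}$ is the $0\times1$ matrix). Direct sums of matrix pairs are blockwise. Two matrix pairs $(A,B)$, $(A',B')$ are equivalent if $SA=A'R$, $SB=B'R$ for nonsingular $S,R$. A regularizing decomposition of a matrix pair $(A,B)$ is a direct sum $(I_r,D)\oplus(M_1,N_1)\oplus\dots\oplus(M_t,N_t)$ equivalent to $(A,B)$, in which $D$ is $r\times r$ nonsingular (the regular part is $(I_r,D)$) and each $(M_i,N_i)$ is one of $(I_k,J_k(0))$, $(J_k(0),I_k)$, $(L_k,R_k)$, $(L_k^T,R_k^T)$, $k\ge1$. *)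

From HB Require Import structures.
From mathcomp Require Import all_boot all_order all_algebra.
Set Implicit Arguments. Unset Strict Implicit. Unset Printing Implicit Defensive.
Import Order.TTheory GRing.Theory Num.Theory.
Local Open Scope ring_scope.

(* Convention: a linear map F^n -> F^m is a matrix 'M_(m, n) acting on
   column vectors 'cV_n (as in the paper). *)

Section Defs.
Variable F : fieldType.

Record mxpair := MxPair {
  mp_m : nat; mp_n : nat;
  mp_A : 'M[F]_(mp_m, mp_n); mp_B : 'M[F]_(mp_m, mp_n) }.

Definition dsum (p q : mxpair) : mxpair :=
  @MxPair (mp_m p + mp_m q) (mp_n p + mp_n q)
    (block_mx (mp_A p) 0 0 (mp_A q)) (block_mx (mp_B p) 0 0 (mp_B q)).

Definition empty_pair : mxpair := @MxPair 0 0 0 0.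

(* (A,B) ~ (A',B') iff S A = A' R, S B = B' R with S, R nonsingular
   (invertibility expressed by two-sided inverses, which forces equal sizes). *)
Definition pair_equiv (p q : mxpair) : Prop :=
  exists (S : 'M[F]_(mp_m q, mp_m p)) (S' : 'M[F]_(mp_m p, mp_m q))
         (R : 'M[F]_(mp_n q, mp_n p)) (R' : 'M[F]_(mp_n p, mp_n q)),
    [/\ S *m S' = 1%:M, S' *m S = 1%:M, R *m R' = 1%:M & R' *m R = 1%:M] /\
    S *m mp_A p = mp_A q *m R /\ S *m mp_B p = mp_B q *m R.

Definition Jnil (k : nat) : 'M[F]_k :=
  \matrix_(i < k, j < k) (if val i == (val j).+1 then 1 else 0).

Definition Lmx (k : nat) : 'M[F]_(k.-1, k) :=
  \matrix_(i < k.-1, j < k) (if val j == val i then 1 else 0).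
Definition Rmx (k : nat) : 'M[F]_(k.-1, k) :=
  \matrix_(i < k.-1, j < k) (if val j == (val i).+1 then 1 else 0).

End Defs.

Inductive kind := KIJ
                | KJI
                | KL
                | KLT.

Definition summand (F : fieldType) (x : kind * nat) : mxpair F :=
  let k := x.2 in
  match x.1 with
  | KIJ => MxPair 1%:M (Jnil F k)
  | KJI => MxPair (Jnil F k) 1%:M
  | KL  => MxPair (Lmx F k) (Rmx F k)
  | KLT => MxPair (Lmx F k)^T (Rmx F k)^T
  end.

Definition decomp_pair (F : fieldType) (r : nat) (D : 'M[F]_r)
    (s : seq (kind * nat)) : mxpair F :=
  dsum (MxPair 1%:M D) (foldr (@dsum F) (empty_pair F) (map (@summand F) s)).

Definition regdec (F : fieldType) (m n : nat) (A B : 'M[F]_(m, n))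
    (r : nat) (D : 'M[F]_r) (s : seq (kind * nat)) : Prop :=
  [/\ D \in unitmx, all (fun x => 0 < x.2)%N s
    & pair_equiv (MxPair A B) (decomp_pair D s)].

Definition shift_summand (x : kind * nat) : seq (kind * nat) :=
  match x with
  | (KL, k.+2) => [:: (KL, k.+1)]
  | (KL, _) => [::]
  | _ => [:: x]
  end.
Definition shift_decomp (s : seq (kind * nat)) : seq (kind * nat) :=
  flatten (map shift_summand s).

Definition isL1 (x : kind * nat) : bool :=
  match x with (KL, 1%N) => true | _ => false end.

(* P : 'M_(k, n) is (the coordinate form of) a quotient map F^n -> F^n / K:
   P is surjective and its kernel is exactly K. *)
Definition quotient_map (F : fieldType) (k n : nat) (P : 'M[F]_(k, n))
    (K : 'cV[F]_n -> Prop) : Prop :=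
  \rank P = k /\ forall x : 'cV[F]_n, P *m x = 0 <-> K x.

(* Surjectivity of A1 and B1 rules out the summands (I_k, J_k(0)),
   (J_k(0), I_k) and (L_k^T, R_k^T): J_k(0) has a zero first row and L_k^T has
   fewer columns than rows.  Passing to the induced pair (A2, B2) commutes with
   equivalence and with direct sums, fixes (I_r, D), kills (L_1, R_1) and sends
   (L_k, R_k) to (L_(k-1), R_(k-1)).  Since induced maps of a surjective pair
   are again surjective, dim U2 = dim V1 and dim U3 = dim V2, and the count of
   the summands (L_1, R_1) is read off from the sizes of the blocks. *)

From HB Require Import structures.
From mathcomp Require Import all_boot all_order all_algebra zify.
Set Implicit Arguments. Unset Strict Implicit. Unset Printing Implicit Defensive.
Import Order.TTheory GRing.Theory Num.Theory.
Local Open Scope ring_scope.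

Section MatrixFacts.
Variable F : fieldType.

Lemma mulmx_eq0_ker a b n (P : 'M[F]_(a, n)) (B : 'M[F]_(b, n)) :
    (forall x : 'cV_n, P *m x = 0 -> B *m x = 0) ->
  forall p (X : 'M_(n, p)), P *m X = 0 -> B *m X = 0.
Proof.
move=> PB p X PX; apply/matrixP => i j.
have /(congr1 (fun v : 'cV_b => v i 0)) : B *m col j X = 0.
  by apply: PB; rewrite colE mulmxA PX mul0mx.
by rewrite colE mulmxA -colE !mxE.
Qed.

Lemma mulmx_pinvK_ker a b n (P : 'M[F]_(a, n)) (B : 'M[F]_(b, n)) :
    row_free P -> (forall x : 'cV_n, P *m x = 0 -> B *m x = 0) ->
  B *m pinvmx P *m P = B.
Proof.
move=> fP PB; apply/eqP; rewrite -subr_eq0 -mulmxA -{2}[B]mulmx1 -mulmxBr.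
apply/eqP/(mulmx_eq0_ker PB).
by rewrite mulmxBr mulmxA (mulmxVp fP) mul1mx mulmx1 subrr.
Qed.

Lemma mulmx1_leq a b (S : 'M[F]_(a, b)) (S' : 'M[F]_(b, a)) :
  S *m S' = 1%:M -> (a <= b)%N.
Proof.
move=> SS'; have /eqP <- : row_free S by apply/row_freeP; exists S'.
exact: rank_leq_col.
Qed.

Lemma mxrank_linv a b p (S : 'M[F]_(a, b)) (S' : 'M[F]_(b, a)) (X : 'M_(b, p)) :
  S' *m S = 1%:M -> \rank (S *m X) = \rank X.
Proof.
move=> S'S; apply/eqP; rewrite eqn_leq mxrankM_maxr /=.
by rewrite -{1}[X]mul1mx -S'S -mulmxA mxrankM_maxr.
Qed.

Lemma mulmx_linv_eq0 a b p (S : 'M[F]_(a, b)) (S' : 'M[F]_(b, a)) (X : 'M_(b, p)) :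
  S' *m S = 1%:M -> S *m X = 0 <-> X = 0.
Proof.
move=> S'S; split=> [SX|->]; last exact: mulmx0.
by rewrite -[X]mul1mx -S'S -mulmxA SX mulmx0.
Qed.

Lemma col_mx_eq0 a b c (X : 'M[F]_(a, c)) (Y : 'M[F]_(b, c)) :
  col_mx X Y = 0 <-> X = 0 /\ Y = 0.
Proof.
split=> [|[-> ->]]; last exact: col_mx0.
by rewrite -col_mx0 => /eq_col_mx.
Qed.

Lemma mul_diag_block_col a b c d k (X : 'M[F]_(a, b)) (Y : 'M[F]_(c, d))
    (x : 'M_(b, k)) (y : 'M_(d, k)) :
  block_mx X 0 0 Y *m col_mx x y = col_mx (X *m x) (Y *m y).
Proof. by rewrite mul_block_col !mul0mx addr0 add0r. Qed.

Lemma row_free_diag_block a b c d (X : 'M[F]_(a, b)) (Y : 'M[F]_(c, d)) :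
  row_free (block_mx X 0 0 Y) = row_free X && row_free Y.
Proof.
rewrite /row_free rank_diag_block_mx.
have := rank_leq_row X; have := rank_leq_row Y; lia.
Qed.

Lemma row_free_row_neq0 m n (A : 'M[F]_(m, n)) i : row_free A -> row i A != 0.
Proof.
move=> fA; rewrite rowE mulmx_free_eq0 //.
apply/eqP => /matrixP/(_ 0 i); rewrite !mxE !eqxx /=; exact/eqP/oner_neq0.
Qed.

Lemma row_free_eqker a b n (P : 'M[F]_(a, n)) (P' : 'M[F]_(b, n)) :
    row_free P -> row_free P' -> (forall x : 'cV_n, P *m x = 0 <-> P' *m x = 0) ->
  exists (T : 'M_(b, a)) (T' : 'M_(a, b)),
    [/\ P' = T *m P, P = T' *m P', T *m T' = 1%:M & T' *m T = 1%:M].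
Proof.
move=> fP fP' PP'.
have eP' := mulmx_pinvK_ker fP (fun x : 'cV_n => proj1 (PP' x)).
have eP := mulmx_pinvK_ker fP' (fun x : 'cV_n => proj2 (PP' x)).
exists (P' *m pinvmx P), (P *m pinvmx P'); split => //.
  by apply: (row_free_inj fP'); rewrite mul1mx -mulmxA eP eP'.
by apply: (row_free_inj fP); rewrite mul1mx -mulmxA eP' eP.
Qed.

End MatrixFacts.

Section InducedPair.
Variable F : fieldType.
Implicit Types p q : mxpair F.

(* [q] is the pair induced by [p] on U / Ker B and V / A(Ker B), in coordinates
   given by quotient maps [P] and [Q]. *)
Definition induced_pair p q : Prop :=
  exists (P : 'M[F]_(mp_n q, mp_n p)) (Q : 'M[F]_(mp_m q, mp_m p)),
  [/\ quotient_map P (fun x => mp_B p *m x = 0),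
      quotient_map Q (fun y => exists x, mp_B p *m x = 0 /\ y = mp_A p *m x),
      mp_A q *m P = Q *m mp_A p & mp_B q *m P = Q *m mp_B p].

Lemma pair_equiv_sizes p q : pair_equiv p q -> mp_m p = mp_m q /\ mp_n p = mp_n q.
Proof.
move=> [S [S' [R [R' [[SS' S'S RR' R'R] _]]]]].
have := mulmx1_leq SS'; have := mulmx1_leq S'S.
have := mulmx1_leq RR'; have := mulmx1_leq R'R; lia.
Qed.

Lemma induced_pair_equivl p p' q :
  pair_equiv p p' -> induced_pair p q -> induced_pair p' q.
Proof.
move=> [S [S' [R [R' [[SS' S'S RR' R'R] [eA eB]]]]]].
move=> [P [Q [[rP kP] [rQ kQ] eA1 eB1]]].
have eA' : mp_A p' = S *m mp_A p *m R' by rewrite eA -mulmxA RR' mulmx1.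
have eB' : mp_B p' = S *m mp_B p *m R' by rewrite eB -mulmxA RR' mulmx1.
have kerB x : mp_B p' *m x = 0 <-> mp_B p *m (R' *m x) = 0.
  by rewrite eB' -!mulmxA; exact: mulmx_linv_eq0 S'S.
exists (P *m R'), (Q *m S'); split.
- split; first by rewrite mxrankMfree // ; apply/row_freeP; exists R.
  by move=> x; rewrite -mulmxA kP kerB.
- split; first by rewrite mxrankMfree // ; apply/row_freeP; exists S.
  move=> y; rewrite -mulmxA kQ; split=> [[x [Bx Sy]]|[x [Bx ->]]].
    exists (R *m x); split; first by rewrite mulmxA -eB -mulmxA Bx mulmx0.
    by rewrite mulmxA -eA -mulmxA -Sy mulmxA SS' mul1mx.
  exists (R' *m x); split; first by rewrite -kerB.
  by rewrite eA' !mulmxA S'S mul1mx.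
- by rewrite mulmxA eA1 eA' -!mulmxA [S' *m _]mulmxA S'S mul1mx.
- by rewrite mulmxA eB1 eB' -!mulmxA [S' *m _]mulmxA S'S mul1mx.
Qed.

Lemma induced_pair_equivr p q q' :
  induced_pair p q -> pair_equiv q q' -> induced_pair p q'.
Proof.
move=> [P [Q [[rP kP] [rQ kQ] eA1 eB1]]] e.
have [em en] := pair_equiv_sizes e.
move: e => [S [S' [R [R' [[SS' S'S RR' R'R] [eA eB]]]]]].
exists (R *m P), (S *m Q); split.
- split; first by rewrite (mxrank_linv _ R'R) rP en.
  by move=> x; rewrite -mulmxA (mulmx_linv_eq0 _ R'R) kP.
- split; first by rewrite (mxrank_linv _ S'S) rQ em.
  by move=> y; rewrite -mulmxA (mulmx_linv_eq0 _ S'S) kQ.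
- by rewrite mulmxA -eA -!mulmxA eA1.
- by rewrite mulmxA -eB -!mulmxA eB1.
Qed.

Lemma induced_pair_unique p q q' :
  induced_pair p q -> induced_pair p q' -> pair_equiv q q'.
Proof.
move=> [P [Q [[rP kP] [rQ kQ] eA eB]]] [P' [Q' [[rP' kP'] [rQ' kQ'] eA' eB']]].
have fP : row_free P by apply/eqP.
have [T [T' [eT _ TT' T'T]]] : exists (T : 'M_(mp_n q', mp_n q)) T',
    [/\ P' = T *m P, P = T' *m P', T *m T' = 1%:M & T' *m T = 1%:M].
  by apply: row_free_eqker; rewrite /row_free ?rP ?rP' // => x; rewrite kP kP'.
have [U [U' [eU _ UU' U'U]]] : exists (U : 'M_(mp_m q', mp_m q)) U',
    [/\ Q' = U *m Q, Q = U' *m Q', U *m U' = 1%:M & U' *m U = 1%:M].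
  by apply: row_free_eqker; rewrite /row_free ?rQ ?rQ' // => y; rewrite kQ kQ'.
exists U, U', T, T'; split => //; split; apply: (row_free_inj fP).
  by rewrite -!mulmxA eA -eT eA' eU mulmxA.
by rewrite -!mulmxA eB -eT eB' eU mulmxA.
Qed.

End InducedPair.

Section DirectSums.
Variable F : fieldType.
Implicit Types p q : mxpair F.

Lemma induced_pair_dsum p q p' q' :
  induced_pair p q -> induced_pair p' q' -> induced_pair (dsum p p') (dsum q q').
Proof.
move=> [P [Q [[rP kP] [rQ kQ] eA eB]]] [P' [Q' [[rP' kP'] [rQ' kQ'] eA' eB']]].
exists (block_mx P 0 0 P'), (block_mx Q 0 0 Q'); split.
- split; first by rewrite rank_diag_block_mx rP rP'.
  move=> x; rewrite /= -[x]vsubmxK !mul_diag_block_col !col_mx_eq0 kP kP'.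
  exact: iff_refl.
- split; first by rewrite rank_diag_block_mx rQ rQ'.
  move=> y; rewrite /= -[y]vsubmxK mul_diag_block_col col_mx_eq0 kQ kQ'.
  split=> [[[x1 [Bx1 ->]] [x2 [Bx2 ->]]]|[x [Bx e]]].
    exists (col_mx x1 x2); rewrite !mul_diag_block_col Bx1 Bx2.
    by split; first exact: col_mx0.
  move: Bx e; rewrite -[x]vsubmxK !mul_diag_block_col col_mx_eq0.
  move=> [Bx1 Bx2] /eq_col_mx [-> ->].
  by split; [exists (usubmx x) | exists (dsubmx x)].
- by rewrite /= !mulmx_block !mulmx0 !mul0mx !addr0 !add0r eA eA'.
- by rewrite /= !mulmx_block !mulmx0 !mul0mx !addr0 !add0r eB eB'.
Qed.

Lemma pair_equiv_dsum0 q : pair_equiv (dsum (empty_pair F) q) q.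
Proof.
have block0 a b (X : 'M[F]_(a, b)) : block_mx (0 : 'M_0) 0 0 X = X.
  by rewrite /block_mx col_flat_mx row_thin_mx.
exists 1%:M, 1%:M, 1%:M, 1%:M; split; first by rewrite !mulmx1.
by rewrite /= !block0 mul1mx mulmx1 mul1mx mulmx1.
Qed.

End DirectSums.

Section ShiftMatrices.
Variable F : fieldType.

Lemma sum_if_eq n c (g : 'I_n -> F) (c_lt : (c < n)%N) :
  \sum_(l < n) (if val l == c then g l else 0) = g (Ordinal c_lt).
Proof.
rewrite (bigD1 (Ordinal c_lt)) //= eqxx big1 ?addr0 // => l ne_l.
by case: eqP => // e; case/eqP: ne_l; apply: val_inj.
Qed.

Lemma sum_if_eq_out n c (g : 'I_n -> F) : (n <= c)%N ->
  \sum_(l < n) (if val l == c then g l else 0) = 0.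
Proof.
move=> le_nc; rewrite big1 // => l _; case: eqP => // e.
by move: le_nc; rewrite -e leqNgt ltn_ord.
Qed.

Lemma mul_if10 (b : bool) (x : F) : (if b then 1 else 0) * x = if b then x else 0.
Proof. by case: b; rewrite ?mul1r ?mul0r. Qed.

Lemma if_val_eq n (i i' : 'I_n) : (if val i == val i' then 1 else 0) = (i == i')%:R :> F.
Proof. by rewrite val_eqE; case: (i == i'). Qed.

Lemma Rmx_mul_tr j : Rmx F j.+1 *m (Rmx F j.+1)^T = 1%:M.
Proof.
apply/matrixP => i i'; rewrite !mxE.
under eq_bigr => l _ do rewrite !mxE mul_if10.
by rewrite (sum_if_eq _ (ltn_ord i : i.+1 < j.+1)%N) /= eqSS if_val_eq.
Qed.

Lemma row_free_Rmx j : row_free (Rmx F j.+1).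
Proof. by apply/row_freeP; exists (Rmx F j.+1)^T; exact: Rmx_mul_tr. Qed.

Lemma Lmx_mul_tr j : Lmx F j.+1 *m (Lmx F j.+1)^T = 1%:M.
Proof.
apply/matrixP => i i'; rewrite !mxE.
under eq_bigr => l _ do rewrite !mxE mul_if10.
by rewrite (sum_if_eq _ (ltnW (ltn_ord i) : i < j.+1)%N) /= if_val_eq.
Qed.

Lemma Rmx_mul_Lmx j : Rmx F j.+1 *m Lmx F j.+2 = Lmx F j.+1 *m Rmx F j.+2.
Proof.
apply/matrixP => i l; rewrite !mxE.
under eq_bigr => a _ do rewrite !mxE mul_if10.
under [in RHS]eq_bigr => a _ do rewrite !mxE mul_if10.
by rewrite (sum_if_eq _ (ltn_ord i : i.+1 < j.+1)%N)
  (sum_if_eq _ (ltnW (ltn_ord i) : i < j.+1)%N).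
Qed.

Lemma Rmx_mul_trLmx j : Rmx F j.+2 *m (Lmx F j.+2)^T = (Lmx F j.+1)^T *m Rmx F j.+1.
Proof.
apply/matrixP => i i'; rewrite !mxE.
under eq_bigr => a _ do rewrite !mxE mul_if10.
under [in RHS]eq_bigr => a _ do rewrite !mxE (eq_sym (val i)) mul_if10.
rewrite (sum_if_eq _ (ltn_ord i : i.+1 < j.+2)%N) /=.
have [lt_ij|le_ji] := ltnP i j; first by rewrite (sum_if_eq _ lt_ij) /= eq_sym.
rewrite sum_if_eq_out //; case: eqP => // e.
by move: (ltn_ord i'); rewrite -e /= ltnS ltnNge le_ji.
Qed.

End ShiftMatrices.

Section Summands.
Variable F : fieldType.

Lemma induced_pair_regular r (D : 'M[F]_r) : D \in unitmx ->
  induced_pair (MxPair 1%:M D) (MxPair 1%:M D).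
Proof.
move=> uD; exists 1%:M, 1%:M; split => /=.
- split=> [|x]; first exact: mxrank1.
  rewrite mul1mx; split=> [->|Dx]; first by rewrite mulmx0.
  by rewrite -(mulKmx uD x) Dx mulmx0.
- split=> [|y]; first exact: mxrank1.
  rewrite mul1mx; split=> [->|[x [Dx ->]]]; first by exists 0; rewrite !mulmx0.
  by rewrite mul1mx -(mulKmx uD x) Dx mulmx0.
- by [].
- by rewrite mulmx1 mul1mx.
Qed.

Lemma induced_pair_flat n (A B : 'M[F]_(0, n)) :
  induced_pair (MxPair A B) (empty_pair F).
Proof.
exists 0, 0; split => /=.
- by split=> [|x]; [exact: mxrank0 | split=> _; apply: flatmx0].
- split=> [|y]; first exact: mxrank0.
  by split=> _; [exists 0; rewrite !mulmx0 [y]flatmx0 | apply: flatmx0].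
- by rewrite !mul0mx.
- by rewrite !mul0mx.
Qed.

(* The quotient maps drop the first coordinate: Ker R_(j+2) and
   L_(j+2)(Ker R_(j+2)) are spanned by the first basis vectors. *)
Lemma induced_pair_L j :
  induced_pair (summand F (KL, j.+2)) (summand F (KL, j.+1)).
Proof.
exists (Rmx F j.+2), (Rmx F j.+1); split => /=.
- by split=> [|x]; [apply/eqP/row_free_Rmx | exact: iff_refl].
- split=> [|y]; first exact/eqP/row_free_Rmx.
  split=> [Ry | [x [Rx ->]]].
    exists ((Lmx F j.+2)^T *m y); rewrite !mulmxA Rmx_mul_trLmx Lmx_mul_tr mul1mx.
    by rewrite -mulmxA Ry mulmx0.
  by rewrite mulmxA Rmx_mul_Lmx -mulmxA Rx mulmx0.
- by rewrite Rmx_mul_Lmx.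
- by [].
Qed.

Lemma Jnil_not_row_free k : ~~ row_free (Jnil F k.+1).
Proof.
apply: contraL (row_free_row_neq0 0) _.
by apply/eqP/matrixP => i j; rewrite !mxE.
Qed.

Lemma trLmx_not_row_free k : ~~ row_free (Lmx F k.+1)^T.
Proof.
by apply/negP => /eqP rLt; have := rank_leq_col (Lmx F k.+1)^T; rewrite rLt ltnn.
Qed.

End Summands.

Section Surjectivity.
Variable F : fieldType.
Implicit Types p q : mxpair F.

Definition surjective_pair p : bool := row_free (mp_A p) && row_free (mp_B p).

Lemma surjective_dsum p q :
  surjective_pair (dsum p q) = surjective_pair p && surjective_pair q.
Proof. by rewrite /surjective_pair /= !row_free_diag_block andbACA. Qed.

Lemma pair_equiv_surjective p q :
  pair_equiv p q -> surjective_pair p -> surjective_pair q.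
Proof.
move=> e; have [em _] := pair_equiv_sizes e.
move: e => [S [S' [R [R' [[SS' S'S RR' R'R] [eA eB]]]]]].
have fR : row_free R by apply/row_freeP; exists R'.
by rewrite /surjective_pair /row_free -(mxrankMfree _ fR) -eA -(mxrankMfree _ fR)
  -eB !(mxrank_linv _ S'S) -em.
Qed.

Lemma induced_pair_surjective p q :
  induced_pair p q -> surjective_pair p -> surjective_pair q.
Proof.
move=> [P [Q [[rP _] [rQ _] eA eB]]] /andP[fA fB].
have fP : row_free P by apply/eqP.
by rewrite /surjective_pair /row_free -(mxrankMfree _ fP) eA -(mxrankMfree _ fP) eB
  !mxrankMfree // rQ eqxx.
Qed.

Lemma quotient_map_ker_size a b n (P : 'M[F]_(a, n)) (B : 'M[F]_(b, n)) :
  row_free B -> quotient_map P (fun x => B *m x = 0) -> a = b.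
Proof.
move=> fB [/eqP fP kP]; have [T [T' [_ _ TT' T'T]]] := row_free_eqker fP fB kP.
by apply/eqP; rewrite eqn_leq (mulmx1_leq TT') (mulmx1_leq T'T).
Qed.

End Surjectivity.

Definition is_L (x : kind * nat) : bool := if x.1 is KL then true else false.

Lemma shift_decomp_pos s : all (fun x => 0 < x.2)%N s ->
  all (fun x => 0 < x.2)%N (shift_decomp s).
Proof.
elim: s => [|x s IH] //= /andP[x_gt0 /IH s_gt0].
by rewrite all_cat s_gt0 andbT; case: x x_gt0 => [[] [|[|j]]].
Qed.

Section Decompositions.
Variable F : fieldType.

Definition summands (s : seq (kind * nat)) : mxpair F :=
  foldr (@dsum F) (empty_pair F) (map (@summand F) s).

Lemma decomp_pairE r (D : 'M[F]_r) s :
  decomp_pair D s = dsum (MxPair 1%:M D) (summands s).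
Proof. by []. Qed.

Lemma surjective_summands s : all (fun x => 0 < x.2)%N s ->
  surjective_pair (summands s) -> all is_L s.
Proof.
elim: s => [|[kd [|k]] s IH] //= s_gt0.
rewrite surjective_dsum => /andP[surj_kd /(IH s_gt0) ->]; rewrite andbT.
move: surj_kd; rewrite /surjective_pair.
case: kd => //=; rewrite ?(negbTE (Jnil_not_row_free F k)) ?andbF //.
by rewrite (negbTE (trLmx_not_row_free F k)).
Qed.

Lemma induced_pair_summands s : all is_L s -> all (fun x => 0 < x.2)%N s ->
  induced_pair (summands s) (summands (shift_decomp s)).
Proof.
elim: s => [|[[] [|[|j]]] s IH] //=; first by move=> _ _; apply: induced_pair_flat.
- move=> /IH sL /sL ind_s.
  apply: induced_pair_equivr (pair_equiv_dsum0 _).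
  exact: induced_pair_dsum (induced_pair_flat _ _) ind_s.
- by move=> /IH sL /sL; apply: induced_pair_dsum (induced_pair_L F j).
Qed.

Lemma count_L1_summands s : all is_L s -> all (fun x => 0 < x.2)%N s ->
  (count isL1 s + 2 * mp_m (summands s) =
   mp_n (summands s) + mp_m (summands (shift_decomp s)))%N.
Proof.
elim: s => [|[[] [|[|j]]] s IH] //= /IH sL /sL; rewrite /summands /shift_decomp /=;
  rewrite -/(shift_decomp s) -/(summands s) -/(summands (shift_decomp s)); lia.
Qed.

End Decompositions.

Theorem lemma3 (F : fieldType) (m n : nat) (A1 B1 : 'M[F]_(m, n))
    (m2 n2 : nat) (P : 'M[F]_(n2, n)) (Q : 'M[F]_(m2, m))
    (A2 B2 : 'M[F]_(m2, n2)) (n3 : nat) (P2 : 'M[F]_(n3, n2)) :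
  \rank A1 = m -> \rank B1 = m ->
  quotient_map P (fun x => B1 *m x = 0) ->
  quotient_map Q (fun y => exists x, B1 *m x = 0 /\ y = A1 *m x) ->
  A2 *m P = Q *m A1 -> B2 *m P = Q *m B1 ->
  quotient_map P2 (fun x => B2 *m x = 0) ->
  forall (r : nat) (D : 'M[F]_r) (s : seq (kind * nat)),
    regdec A1 B1 D s ->
    regdec A2 B2 D (shift_decomp s) /\
    ((count isL1 s)%:Z = n%:Z - 2 * n2%:Z + n3%:Z)%R.
Proof.
move=> rA1 rB1 qP qQ eA2 eB2 qP2 r D s [uD s_gt0].
rewrite /regdec !decomp_pairE => equiv1.
have ind12 : induced_pair (MxPair A1 B1) (MxPair A2 B2) by exists P, Q.
have surj1 : surjective_pair (MxPair A1 B1) by apply/andP; split; apply/eqP.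
have sL : all is_L s.
  have := pair_equiv_surjective equiv1 surj1.
  by rewrite surjective_dsum => /andP[_ /(surjective_summands s_gt0)].
have equiv2 : pair_equiv (MxPair A2 B2)
    (dsum (MxPair 1%:M D) (summands F (shift_decomp s))).
  apply: induced_pair_unique (induced_pair_equivl equiv1 ind12) _.
  exact: induced_pair_dsum (induced_pair_regular uD) (induced_pair_summands F sL s_gt0).
split; first by split; [| exact: shift_decomp_pos |].
have /andP[_ fB2] := induced_pair_surjective ind12 surj1.
have n2m : n2 = m := quotient_map_ker_size (introT eqP rB1) qP.
have n3m2 : n3 = m2 := quotient_map_ker_size fB2 qP2.
have [/= m_dec n_dec] := pair_equiv_sizes equiv1.
have [/= m2_dec _] := pair_equiv_sizes equiv2.
have := count_L1_summands F sL s_gt0; lia.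
Qed.
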